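(* For every $n\in\mathbb{N}=\{1,2,\dots\}$, the map $a\mapsto\frac{\Psi_{n+1}(a)}{\Psi_n(a)}$ is strictly increasing on $(0,\infty)$.
   Context: $\Psi_n(x)=\frac{\partial^{n+1}}{\partial x^{n+1}}\log\Gamma(x)$ is the polygamma function of order $n$, where $\Gamma$ is the gamma function. *)

From Stdlib Require Import Reals.
From Coquelicot Require Import Coquelicot.
Open Scope R_scope.

Definition Gamma (x : R) : R :=
  RInt_gen (fun t => Rpower t (x - 1) * exp (- t))
           (at_right 0) (Rbar_locally p_infty).

Definition polygamma (n : nat) (x : R) : R :=
  Derive_n (fun y => ln (Gamma y)) (S n) x.

From Stdlib Require Import Reals Lra Lia Factorial.
From Coquelicot Require Import Coquelicot.
Open Scope R_scope.

(* Gamma is log-convex and satisfies Gamma(x+1) = x Gamma(x).  Comparing slopes of the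
   convex function ln Gamma (Bohr-Mollerup) shows that ln Gamma is the limit of
   y ln(n+1) + ln((n+1)!) - sum_(k<=n+1) ln(y+k), and differentiating termwise gives
   Psi_m(y) = (-1)^(m+1) m! zeta(m+1, y) for m >= 1, where zeta(s, y) = sum_k (y+k)^-s is
   the Hurwitz zeta function.  Hence Psi_(n+1)/Psi_n = -(n+1) zeta(n+2, .)/zeta(n+1, .), and
   zeta(s+1, .)/zeta(s, .) is strictly decreasing: its derivative has the sign of
   s zeta(s+1)^2 - (s+1) zeta(s) zeta(s+2), which is negative because
   zeta(s+1)^2 <= zeta(s) zeta(s+2) by the Cauchy-Schwarz inequality. *)

Lemma ln_le_sub1 (u : R) : 0 < u -> ln u <= u - 1.
Proof. intros Hu. pose proof (exp_ineq1_le (ln u)) as H. rewrite exp_ln in H; lra. Qed.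

Lemma ln_sub_ln_le (t k : R) : 0 < t -> 0 < k -> ln t - ln k <= t / k - 1.
Proof.
  intros Ht Hk. rewrite <- ln_div by assumption.
  apply ln_le_sub1, Rdiv_lt_0_compat; assumption.
Qed.

Lemma exp_convex (l u v : R) : 0 <= l <= 1 ->
  exp (l * u + (1 - l) * v) <= l * exp u + (1 - l) * exp v.
Proof.
  intros Hl. set (m := l * u + (1 - l) * v).
  (* both exponentials lie above the tangent line at [m] *)
  assert (Eu : exp u = exp m * exp (u - m)) by (rewrite <- exp_plus; f_equal; ring).
  assert (Ev : exp v = exp m * exp (v - m)) by (rewrite <- exp_plus; f_equal; ring).
  pose proof (exp_ineq1_le (u - m)). pose proof (exp_ineq1_le (v - m)).
  pose proof (exp_pos m).
  assert (l * (exp m * (1 + (u - m))) + (1 - l) * (exp m * (1 + (v - m))) = exp m)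
    by (unfold m; ring).
  rewrite Eu, Ev.
  assert (l * (exp m * (1 + (u - m))) <= l * (exp m * exp (u - m))).
  { apply Rmult_le_compat_l; [lra|]. apply Rmult_le_compat_l; lra. }
  assert ((1 - l) * (exp m * (1 + (v - m))) <= (1 - l) * (exp m * exp (v - m))).
  { apply Rmult_le_compat_l; [lra|]. apply Rmult_le_compat_l; lra. }
  lra.
Qed.

Lemma exp_le_compat (u v : R) : u <= v -> exp u <= exp v.
Proof. intros [H | ->]; [left; apply exp_increasing, H | right; reflexivity]. Qed.

Lemma is_derive_neg_lt (f df : R -> R) (a b : R) : a < b ->
  (forall y, a <= y <= b -> is_derive f y (df y)) -> (forall y, a <= y <= b -> df y < 0) ->
  f b < f a.
Proof.
  intros Hab Hd Hneg.
  destruct (MVT_gen f a b df) as [c [Hc Heq]].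
  - intros y Hy. rewrite Rmin_left, Rmax_right in Hy by lra. apply Hd. lra.
  - intros y Hy. rewrite Rmin_left, Rmax_right in Hy by lra.
    apply continuity_pt_filterlim, (ex_derive_continuous f). eexists. apply Hd, Hy.
  - rewrite Rmin_left, Rmax_right in Hc by lra.
    pose proof (Hneg c Hc). assert (df c * (b - a) < 0) by (apply Rmult_neg_pos; lra). lra.
Qed.

Lemma ball_Rabs (c r y : R) : ball c r y -> Rabs (y - c) < r.
Proof. intros H; exact H. Qed.

Lemma ex_RInt_pos (f : R -> R) (u v : R) :
  (forall t, 0 < t -> continuous f t) -> 0 < u -> u <= v -> ex_RInt f u v.
Proof.
  intros HC Hu Huv. apply (@ex_RInt_continuous R_CompleteNormedModule).
  intros z Hz. rewrite Rmin_left in Hz by lra. apply HC. lra.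
Qed.

Lemma RInt_le_RInt_nonneg (f : R -> R) (a0 b0 a b : R) :
  (forall t, 0 < t -> continuous f t) -> (forall t, 0 < t -> 0 <= f t) ->
  0 < a -> a <= a0 -> a0 <= b0 -> b0 <= b -> RInt f a0 b0 <= RInt f a b.
Proof.
  intros HC HP Ha H1 H2 H3.
  rewrite <- (RInt_Chasles f a a0 b), <- (RInt_Chasles f a0 b0 b)
    by (apply ex_RInt_pos; auto; lra).
  assert (0 <= RInt f a a0)
    by (apply RInt_ge_0; [lra | apply ex_RInt_pos; auto | intros; apply HP; lra]).
  assert (0 <= RInt f b0 b)
    by (apply RInt_ge_0; [lra | apply ex_RInt_pos; auto; lra | intros; apply HP; lra]).
  change plus with Rplus. lra.
Qed.

Lemma at_right_0_lt (c : R) : 0 < c -> at_right 0 (fun t => 0 < t < c).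
Proof.
  intros Hc. exists (mkposreal c Hc). intros t Ht Hpos. split; [exact Hpos|].
  apply ball_Rabs in Ht. rewrite Rminus_0_r, Rabs_pos_eq in Ht; simpl in Ht; lra.
Qed.

Lemma eventually_0_pinfty (P : R -> R -> Prop) :
  (forall a b, 0 < a < 1 -> 1 < b -> P a b) ->
  filter_prod (at_right 0) (Rbar_locally p_infty) (fun ab => P (fst ab) (snd ab)).
Proof.
  intros HP. apply (Filter_prod _ _ _ (fun a => 0 < a < 1) (fun b => 1 < b)).
  - apply at_right_0_lt, Rlt_0_1.
  - exists 1. tauto.
  - exact HP.
Qed.

Lemma eventually_0_pinfty_between (P : R -> Prop) :
  (forall t, 0 < t -> P t) ->
  filter_prod (at_right 0) (Rbar_locally p_infty)
    (fun ab => forall t, Rmin (fst ab) (snd ab) <= t <= Rmax (fst ab) (snd ab) -> P t).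
Proof.
  intros HP.
  apply (eventually_0_pinfty (fun a b => forall t, Rmin a b <= t <= Rmax a b -> P t)).
  intros a b Ha Hb t Ht.
  rewrite Rmin_left in Ht by lra. apply HP. lra.
Qed.

Lemma is_RInt_gen_derive_0_pinfty (F f : R -> R) (la lb : R) :
  (forall t, 0 < t -> is_derive F t (f t)) -> (forall t, 0 < t -> continuous f t) ->
  filterlim F (at_right 0) (locally la) -> filterlim F (Rbar_locally p_infty) (locally lb) ->
  is_RInt_gen f (at_right 0) (Rbar_locally p_infty) (lb - la).
Proof.
  intros HD HC Ha Hb.
  assert (EDf : forall t, 0 < t -> Derive F t = f t) by (intros; apply is_derive_unique, HD; lra).
  apply (is_RInt_gen_ext (Derive F)).
  - eapply filter_imp; [| exact (eventually_0_pinfty_between _ EDf)].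
    intros ab H t Ht. apply H. lra.
  - apply is_RInt_gen_Derive; auto.
    + apply eventually_0_pinfty_between. intros t Ht. eexists. apply HD, Ht.
    + apply eventually_0_pinfty_between. intros t Ht.
      apply (continuous_ext_loc _ f); [| apply HC, Ht].
      exists (mkposreal t Ht). intros u Hu. symmetry. apply EDf.
      apply ball_Rabs, Rabs_def2 in Hu. simpl in Hu. lra.
Qed.

Lemma ex_RInt_gen_nonneg_bounded (f : R -> R) (M : R) :
  (forall t, 0 < t -> continuous f t) -> (forall t, 0 < t -> 0 <= f t) ->
  (forall a b, 0 < a -> a <= b -> RInt f a b <= M) ->
  exists l, is_RInt_gen f (at_right 0) (Rbar_locally p_infty) l /\
            forall a b, 0 < a -> a <= b -> RInt f a b <= l.
Proof.
  intros HC HP HB.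
  set (E := fun v => exists a b, 0 < a <= b /\ v = RInt f a b).
  assert (Hb : bound E) by (exists M; intros v [a [b [Hab ->]]]; apply HB; lra).
  assert (Hne : exists v, E v) by (exists (RInt f 1 1), 1, 1; split; [lra | reflexivity]).
  destruct (completeness E Hb Hne) as [l [Hub Hlub]].
  assert (Hle : forall a b, 0 < a -> a <= b -> RInt f a b <= l)
    by (intros a b Ha Hab; apply Hub; exists a, b; split; [lra | reflexivity]).
  exists l. split; [| exact Hle].
  intros P [eps HPe].
  assert (Hv : exists a0 b0, 0 < a0 <= b0 /\ l - eps < RInt f a0 b0).
  { apply Classical_Prop.NNPP. intros Hn.
    assert (is_upper_bound E (l - eps)).
    { intros v [a [b [Hab ->]]]. apply Rnot_lt_le. intros Hlt. apply Hn. exists a, b; auto. }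
    specialize (Hlub _ H). pose proof (cond_pos eps). lra. }
  destruct Hv as [a0 [b0 [Hab0 Hv]]].
  apply (Filter_prod _ _ _ (fun a => 0 < a < a0) (fun b => b0 < b)).
  - apply at_right_0_lt. lra.
  - exists b0. tauto.
  - intros a b Ha Hb'. simpl. exists (RInt f a b). split.
    + apply (@RInt_correct R_CompleteNormedModule), ex_RInt_pos; auto; lra.
    + apply HPe. change (Rabs (RInt f a b - l) < eps).
      assert (RInt f a b <= l) by (apply Hle; lra).
      assert (RInt f a0 b0 <= RInt f a b) by (apply RInt_le_RInt_nonneg; auto; lra).
      rewrite Rabs_left1; lra.
Qed.

Lemma is_RInt_gen_le_0_pinfty (f g : R -> R) (lf lg : R) :
  (forall t, 0 < t -> f t <= g t) ->
  is_RInt_gen f (at_right 0) (Rbar_locally p_infty) lf ->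
  is_RInt_gen g (at_right 0) (Rbar_locally p_infty) lg -> lf <= lg.
Proof.
  intros Hfg Hf Hg.
  pose proof (is_RInt_gen_minus _ _ _ _ Hg Hf) as Hd.
  cut (norm (minus lg lf) <= minus lg lf).
  { intros H. change (Rabs (lg - lf) <= lg - lf) in H. pose proof (Rabs_pos (lg - lf)). lra. }
  refine (RInt_gen_norm (Fa := at_right 0) (Fb := Rbar_locally p_infty) _ _ _ _ _ _ Hd Hd).
  - apply (eventually_0_pinfty (fun a b => a <= b)). intros; lra.
  - apply (eventually_0_pinfty (fun a b => forall t, a <= t <= b -> _)).
    intros a b Ha Hb t Ht. change (Rabs (g t - f t) <= g t - f t).
    rewrite Rabs_pos_eq; [lra|]. pose proof (Hfg t ltac:(lra)). lra.
Qed.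

Lemma is_RInt_gen_comb {Fa Fb : (R -> Prop) -> Prop} {FFa : Filter Fa} {FFb : Filter Fb}
  (f g : R -> R) (c d lf lg : R) :
  is_RInt_gen f Fa Fb lf -> is_RInt_gen g Fa Fb lg ->
  is_RInt_gen (fun t => c * f t + d * g t) Fa Fb (c * lf + d * lg).
Proof.
  intros Hf Hg.
  exact (is_RInt_gen_plus _ _ _ _ (is_RInt_gen_scal _ c _ Hf) (is_RInt_gen_scal _ d _ Hg)).
Qed.

Lemma is_derive_sum_f_R0 (h h' : nat -> R -> R) (y : R) (n : nat) :
  (forall k, is_derive (h k) y (h' k y)) ->
  is_derive (fun y => sum_f_R0 (fun k => h k y) n) y (sum_f_R0 (fun k => h' k y) n).
Proof.
  intros H. induction n as [| n IH]; [apply H|].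
  apply (is_derive_plus (fun y => sum_f_R0 (fun k => h k y) n) (h (S n))); auto.
Qed.

Lemma Rabs_Series_le (a b : nat -> R) :
  (forall k, Rabs (a k) <= b k) -> ex_series b -> Rabs (Series a) <= Series b.
Proof.
  intros Hab Hb.
  assert (Ha : ex_series (fun k => Rabs (a k))).
  { apply (@ex_series_le R_AbsRing R_CompleteNormedModule _ b); [| exact Hb].
    intros k. change (Rabs (Rabs (a k)) <= b k). rewrite Rabs_Rabsolu. apply Hab. }
  apply Rle_trans with (Series (fun k => Rabs (a k))).
  - apply Series_Rabs, Ha.
  - apply Series_le; [| exact Hb]. intros k. split; [apply Rabs_pos | apply Hab].
Qed.

Lemma CVU_Series_dominated (g : nat -> R -> R) (M : nat -> R) (c : R) (r : posreal) :
  (forall k y, Boule c r y -> Rabs (g k y) <= M k) -> ex_series M ->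
  CVU (fun n y => sum_f_R0 (fun k => g k y) n) (fun y => Series (fun k => g k y)) c r.
Proof.
  intros Hb HM eps Heps.
  destruct (ex_series_Reals_0 M HM) as [lM HlM].
  assert (EM : Series M = lM).
  { apply is_series_unique, is_series_Reals, HlM. }
  destruct (HlM eps Heps) as [N HN].
  exists N. intros n y Hn Hy.
  assert (Hex : ex_series (fun k => g k y))
    by (apply (@ex_series_le R_AbsRing R_CompleteNormedModule _ M); auto).
  (* both remainders are tails of the series from index [S n] *)
  rewrite (Series_incr_n _ (S n)) by (auto with arith).
  specialize (HN n Hn). unfold R_dist in HN.
  rewrite <- EM, (Series_incr_n M (S n)) in HN by (auto with arith).
  simpl pred in *.
  replace (sum_f_R0 (fun k => g k y) n + Series (fun k => g (S n + k)%nat y) -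
           sum_f_R0 (fun k => g k y) n) with (Series (fun k => g (S n + k)%nat y)) by ring.
  replace (sum_f_R0 M n - (sum_f_R0 M n + Series (fun k => M (S n + k)%nat)))
    with (- Series (fun k => M (S n + k)%nat)) in HN by ring.
  rewrite Rabs_Ropp in HN.
  eapply Rle_lt_trans; [| eapply Rle_lt_trans; [apply Rle_abs | exact HN]].
  apply Rabs_Series_le; [intros k; apply Hb, Hy | apply (ex_series_incr_n M (S n)), HM].
Qed.

Lemma is_derive_Series (h h' : nat -> R -> R) (M : nat -> R) (a x : R) : a < x ->
  (forall k y, a < y -> is_derive (h k) y (h' k y)) ->
  (forall y, a < y -> ex_series (fun k => h k y)) ->
  ex_series M -> (forall k y, a < y -> Rabs (h' k y) <= M k) ->
  is_derive (fun y => Series (fun k => h k y)) x (Series (fun k => h' k x)).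
Proof.
  intros Hax Hd Hs HM Hb. apply is_derive_Reals.
  set (r := mkposreal (x - a) (proj2 (Rlt_0_minus a x) Hax)).
  assert (Hr : forall y, Boule x r y -> a < y)
    by (intros y Hy; unfold Boule in Hy; simpl in Hy; apply Rabs_def2 in Hy; lra).
  apply (CVU_derivable (fun n y => sum_f_R0 (fun k => h k y) n)
           (fun n y => sum_f_R0 (fun k => h' k y) n)
           (fun y => Series (fun k => h k y)) (fun y => Series (fun k => h' k y)) x r).
  - apply (CVU_Series_dominated h' M); [intros k y Hy; apply Hb, Hr, Hy | exact HM].
  - intros y Hy. apply is_lim_seq_Reals.
    apply (is_lim_seq_ext (sum_n (fun k => h k y))); [intros; apply sum_n_Reals|].
    apply Series_correct, Hs, Hr, Hy.
  - intros n y Hy. apply is_derive_Reals, is_derive_sum_f_R0. intros k. apply Hd, Hr, Hy.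
  - apply Boule_center.
Qed.

Lemma Series_nonneg (a : nat -> R) : (forall k, 0 <= a k) -> ex_series a -> 0 <= Series a.
Proof.
  intros Ha Hex.
  replace 0 with (Series (fun k => 0 * a k)) by (rewrite Series_scal_l; ring).
  apply Series_le; [| exact Hex]. intros k. rewrite Rmult_0_l. split; [lra | apply Ha].
Qed.

Lemma Series_Cauchy_Schwarz (a w : nat -> R) : (forall k, 0 <= a k) ->
  ex_series a -> ex_series (fun k => a k * w k) -> ex_series (fun k => a k * w k ^ 2) ->
  Series (fun k => a k * w k) ^ 2 <= Series a * Series (fun k => a k * w k ^ 2).
Proof.
  intros Ha HA HB HC.
  set (A := Series a). set (B := Series (fun k => a k * w k)).
  set (C := Series (fun k => a k * w k ^ 2)).
  assert (HA0 : 0 <= A) by (apply Series_nonneg; assumption).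
  assert (Hscal : forall c b, ex_series b -> ex_series (fun k => c * b k))
    by (intros c b; apply (ex_series_scal_l c b)).
  assert (Hplus : forall b d, ex_series b -> ex_series d -> ex_series (fun k => b k + d k))
    by (intros b d; apply (ex_series_plus b d)).
  assert (Hq : forall l, 0 <= l ^ 2 * A + -2 * l * B + C).
  { intros l.
    replace (l ^ 2 * A + -2 * l * B + C)
      with (Series (fun k => l ^ 2 * a k + -2 * l * (a k * w k) + a k * w k ^ 2)).
    - apply Series_nonneg.
      + intros k. replace (l ^ 2 * a k + -2 * l * (a k * w k) + a k * w k ^ 2)
          with (a k * (w k - l) ^ 2) by ring.
        apply Rmult_le_pos; [apply Ha | apply pow2_ge_0].
      + auto.
    - rewrite !Series_plus, !Series_scal_l; auto. }
  destruct (Req_dec A 0) as [HA1 | HA1].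
  - (* a degenerate quadratic: the linear term must vanish *)
    destruct (Req_dec B 0) as [HB0 | HB0]; [rewrite HB0, HA1; lra|].
    specialize (Hq ((C + 1) / (2 * B))). rewrite HA1 in Hq.
    replace (((C + 1) / (2 * B)) ^ 2 * 0 + -2 * ((C + 1) / (2 * B)) * B + C) with (-1) in Hq
      by (field; exact HB0). lra.
  - specialize (Hq (B / A)).
    replace ((B / A) ^ 2 * A + -2 * (B / A) * B + C) with (C - B ^ 2 / A) in Hq
      by (field; exact HA1).
    assert (0 < A) by lra.
    apply Rmult_le_compat_r with (r := A) in Hq; [| lra].
    replace ((C - B ^ 2 / A) * A) with (A * C - B ^ 2) in Hq by (field; lra). lra.
Qed.

Lemma sum_inv_sq_le (n : nat) : sum_f_R0 (fun k => / (INR k + 1) ^ 2) n <= 2 - / (INR n + 1).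
Proof.
  induction n as [| n IH]; cbn [sum_f_R0].
  - simpl. lra.
  - rewrite S_INR. pose proof (pos_INR n).
    assert (/ (INR n + 1 + 1) ^ 2 <= / (INR n + 1) - / (INR n + 1 + 1)).
    { replace (/ (INR n + 1) - / (INR n + 1 + 1)) with (/ ((INR n + 1) * (INR n + 1 + 1)))
        by (field; lra).
      apply Rinv_le_contravar; [nra | simpl; nra]. }
    lra.
Qed.

Lemma ex_series_inv_sq : ex_series (fun k => / (INR k + 1) ^ 2).
Proof.
  apply ex_series_Reals_1, growing_cv.
  - intros n. cbn [sum_f_R0]. pose proof (pos_INR (S n)).
    assert (0 < / (INR (S n) + 1) ^ 2) by (apply Rinv_0_lt_compat, pow_lt; lra). lra.
  - exists 2. intros v [n ->]. pose proof (sum_inv_sq_le n). pose proof (pos_INR n).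
    assert (0 < / (INR n + 1)) by (apply Rinv_0_lt_compat; lra). lra.
Qed.

Lemma ex_series_scal_inv_sq (C : R) : ex_series (fun k => C / (INR k + 1) ^ 2).
Proof. apply (ex_series_scal_l C (fun k => / (INR k + 1) ^ 2)), ex_series_inv_sq. Qed.

Definition Gamma_integrand (x t : R) : R := Rpower t (x - 1) * exp (- t).

Lemma Gamma_integrand_exp (x t : R) : Gamma_integrand x t = exp ((x - 1) * ln t - t).
Proof. unfold Gamma_integrand, Rpower, Rminus. rewrite <- exp_plus. reflexivity. Qed.

Lemma Gamma_integrand_pos (x t : R) : 0 < Gamma_integrand x t.
Proof. rewrite Gamma_integrand_exp. apply exp_pos. Qed.

Lemma Gamma_integrand_continuous (x t : R) : 0 < t -> continuous (Gamma_integrand x) t.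
Proof.
  intros Ht. apply (ex_derive_continuous (Gamma_integrand x)).
  unfold Gamma_integrand, Rpower. auto_derive. lra.
Qed.

Lemma Gamma_integrand_tail_le (x : R) :
  exists K, 0 < K /\ forall t, 1 <= t -> Gamma_integrand x t <= K * exp (- t / 2).
Proof.
  set (k := 2 * (Rabs (x - 1) + 1)).
  exists (exp (Rabs (x - 1) * ln k)). split; [apply exp_pos|]. intros t Ht.
  rewrite Gamma_integrand_exp, <- exp_plus. apply exp_le_compat.
  pose proof (Rabs_pos (x - 1)).
  assert (Hk : 0 < k) by (unfold k; lra).
  assert (Hl : ln t - ln k <= t / k - 1) by (apply ln_sub_ln_le; lra).
  assert (Hl0 : 0 <= ln t) by (rewrite <- ln_1; apply ln_le; lra).
  assert ((x - 1) * ln t <= Rabs (x - 1) * ln t)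
    by (apply Rmult_le_compat_r; [lra | apply Rle_abs]).
  assert (Rabs (x - 1) * ln t <= Rabs (x - 1) * (ln k + t / k))
    by (apply Rmult_le_compat_l; lra).
  assert (Rabs (x - 1) * (t / k) <= t / 2).
  { apply Rmult_le_reg_r with k; [lra|]. unfold k. field_simplify; lra. }
  lra.
Qed.

Lemma RInt_Gamma_integrand_head (x a : R) : 0 < x -> 0 < a -> a <= 1 ->
  RInt (Gamma_integrand x) a 1 <= / x.
Proof.
  intros Hx Ha Ha1.
  assert (HI : is_RInt (fun t => Rpower t (x - 1)) a 1 (Rpower 1 x / x - Rpower a x / x)).
  { apply (@is_RInt_derive R_CompleteNormedModule (fun t => Rpower t x / x)).
    - intros t Ht. rewrite Rmin_left, Rmax_right in Ht by lra.
      apply is_derive_Reals.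
      replace (Rpower t (x - 1)) with (x * Rpower t (x - 1) * / x) by (field; lra).
      apply derivable_pt_lim_scal_right, derivable_pt_lim_power. lra.
    - intros t Ht. rewrite Rmin_left, Rmax_right in Ht by lra.
      apply (ex_derive_continuous (fun t => Rpower t (x - 1))). unfold Rpower. auto_derive. lra. }
  apply Rle_trans with (RInt (fun t => Rpower t (x - 1)) a 1).
  - apply RInt_le; [lra | apply ex_RInt_pos; auto using Gamma_integrand_continuous
                      | eexists; exact HI |].
    intros t Ht. unfold Gamma_integrand.
    rewrite <- (Rmult_1_r (Rpower t (x - 1))) at 2.
    apply Rmult_le_compat_l; [unfold Rpower; left; apply exp_pos|].
    rewrite <- exp_0. apply exp_le_compat. lra.
  - rewrite (is_RInt_unique _ _ _ _ HI).
    unfold Rpower at 1. rewrite ln_1, Rmult_0_r, exp_0.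
    assert (0 < Rpower a x) by apply exp_pos.
    assert (0 < / x) by (apply Rinv_0_lt_compat; lra).
    unfold Rdiv. nra.
Qed.

Lemma RInt_Gamma_integrand_tail (x : R) :
  exists K, forall b, 1 <= b -> RInt (Gamma_integrand x) 1 b <= K.
Proof.
  destruct (Gamma_integrand_tail_le x) as [K [HK Hle]].
  exists (2 * K). intros b Hb.
  assert (HI : is_RInt (fun t => K * exp (- t / 2)) 1 b
                 (-2 * K * exp (- b / 2) - -2 * K * exp (- 1 / 2))).
  { apply (@is_RInt_derive R_CompleteNormedModule (fun t => -2 * K * exp (- t / 2))).
    - intros t Ht. auto_derive; auto. unfold Rdiv. field.
    - intros t Ht. apply (ex_derive_continuous (fun t => K * exp (- t / 2))).
      auto_derive. exact I. }
  apply Rle_trans with (RInt (fun t => K * exp (- t / 2)) 1 b).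
  - apply RInt_le; [lra | apply ex_RInt_pos; auto using Gamma_integrand_continuous; lra
                      | eexists; exact HI |].
    intros t Ht. apply Hle. lra.
  - rewrite (is_RInt_unique _ _ _ _ HI).
    pose proof (exp_pos (- b / 2)). pose proof (exp_pos (- 1 / 2)).
    assert (exp (- 1 / 2) <= 1) by (rewrite <- exp_0; apply exp_le_compat; lra).
    nra.
Qed.

Lemma RInt_Gamma_integrand_bounded (x : R) : 0 < x ->
  exists M, forall a b, 0 < a -> a <= b -> RInt (Gamma_integrand x) a b <= M.
Proof.
  intros Hx. destruct (RInt_Gamma_integrand_tail x) as [K HK].
  exists (/ x + K). intros a b Ha Hab.
  assert (Hm : 0 < Rmin a 1) by (apply Rmin_pos; lra).
  apply Rle_trans with (RInt (Gamma_integrand x) (Rmin a 1) (Rmax b 1)).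
  - apply RInt_le_RInt_nonneg; auto using Gamma_integrand_continuous, Rmin_l, Rmax_l.
    intros t _. left. apply Gamma_integrand_pos.
  - rewrite <- (RInt_Chasles _ (Rmin a 1) 1 (Rmax b 1)).
    + change plus with Rplus. apply Rplus_le_compat.
      * apply RInt_Gamma_integrand_head; auto using Rmin_r.
      * apply HK, Rmax_r.
    + apply ex_RInt_pos; auto using Gamma_integrand_continuous, Rmin_r.
    + apply ex_RInt_pos; auto using Gamma_integrand_continuous, Rmax_r; lra.
Qed.

Lemma Gamma_is_sup (x : R) : 0 < x ->
  is_RInt_gen (Gamma_integrand x) (at_right 0) (Rbar_locally p_infty) (Gamma x) /\
  forall a b, 0 < a -> a <= b -> RInt (Gamma_integrand x) a b <= Gamma x.
Proof.
  intros Hx. destruct (RInt_Gamma_integrand_bounded x Hx) as [M HM].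
  destruct (ex_RInt_gen_nonneg_bounded (Gamma_integrand x) M) as [l [Hl Hle]];
    auto using Gamma_integrand_continuous.
  { intros t _. left. apply Gamma_integrand_pos. }
  replace (Gamma x) with l; [split; assumption|].
  symmetry. apply is_RInt_gen_unique, Hl.
Qed.

Lemma is_RInt_gen_Gamma (x : R) : 0 < x ->
  is_RInt_gen (Gamma_integrand x) (at_right 0) (Rbar_locally p_infty) (Gamma x).
Proof. intros Hx. apply (Gamma_is_sup x Hx). Qed.

Lemma Gamma_pos (x : R) : 0 < x -> 0 < Gamma x.
Proof.
  intros Hx. apply Rlt_le_trans with (RInt (Gamma_integrand x) 1 2).
  - apply RInt_gt_0; [lra | intros; apply Gamma_integrand_pos
                          | intros; apply Gamma_integrand_continuous; lra].
  - apply (Gamma_is_sup x Hx); lra.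
Qed.

Lemma pow_exp_lim_0 (x : R) : 0 < x ->
  filterlim (fun t => exp (x * ln t - t)) (at_right 0) (locally 0).
Proof.
  intros Hx. apply filterlim_locally. intros eps.
  pose proof (cond_pos eps) as Heps.
  eapply filter_imp; [| exact (at_right_0_lt (exp (ln eps / x)) (exp_pos _))].
  intros t [Ht0 Ht]. change (Rabs (exp (x * ln t - t) - 0) < eps).
  rewrite Rminus_0_r, Rabs_pos_eq by (left; apply exp_pos).
  apply ln_increasing in Ht; [| exact Ht0]. rewrite ln_exp in Ht.
  assert (x * ln t < ln eps).
  { apply Rmult_lt_compat_l with (r := x) in Ht; [| exact Hx].
    replace (x * (ln eps / x)) with (ln eps) in Ht by (field; lra). exact Ht. }
  rewrite <- (exp_ln eps) by exact Heps. apply exp_increasing. lra.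
Qed.

Lemma pow_exp_lim_pinfty (x : R) : 0 < x ->
  filterlim (fun t => exp (x * ln t - t)) (Rbar_locally p_infty) (locally 0).
Proof.
  intros Hx. apply filterlim_locally. intros eps.
  pose proof (cond_pos eps) as Heps.
  exists (Rmax 1 (2 * (x * ln (2 * x) - ln eps))). intros t Ht.
  pose proof (Rle_lt_trans _ _ _ (Rmax_l _ _) Ht) as H1.
  pose proof (Rle_lt_trans _ _ _ (Rmax_r _ _) Ht) as H2.
  change (Rabs (exp (x * ln t - t) - 0) < eps).
  rewrite Rminus_0_r, Rabs_pos_eq by (left; apply exp_pos).
  assert (Hl : ln t - ln (2 * x) <= t / (2 * x) - 1) by (apply ln_sub_ln_le; lra).
  assert (x * ln t <= x * ln (2 * x) + t / 2 - x).
  { apply Rmult_le_compat_l with (r := x) in Hl; [| lra].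
    replace (x * (t / (2 * x) - 1)) with (t / 2 - x) in Hl by (field; lra). lra. }
  rewrite <- (exp_ln eps) by exact Heps. apply exp_increasing. lra.
Qed.

Lemma Gamma_succ (x : R) : 0 < x -> Gamma (x + 1) = x * Gamma x.
Proof.
  intros Hx.
  assert (Hsucc : forall t, Gamma_integrand (x + 1) t = exp (x * ln t - t))
    by (intros t; rewrite Gamma_integrand_exp; f_equal; ring).
  (* integration by parts: [t^x e^-t] is a primitive of the integrand below and vanishes at
     both ends *)
  assert (H0 : is_RInt_gen (fun t => x * Gamma_integrand x t - Gamma_integrand (x + 1) t)
                 (at_right 0) (Rbar_locally p_infty) (0 - 0)).
  { apply is_RInt_gen_derive_0_pinfty with (F := fun t => exp (x * ln t - t)).
    - intros t Ht. rewrite Hsucc, !Gamma_integrand_exp.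
      auto_derive; [lra|].
      replace ((x - 1) * ln t - t) with (x * ln t - t + - ln t) by ring.
      rewrite (exp_plus _ (- ln t)), exp_Ropp, exp_ln by lra. unfold Rminus. field. lra.
    - intros t Ht.
      apply (ex_derive_continuous
               (fun t => x * Gamma_integrand x t - Gamma_integrand (x + 1) t)).
      unfold Gamma_integrand, Rpower. auto_derive. lra.
    - apply pow_exp_lim_0, Hx.
    - apply pow_exp_lim_pinfty, Hx. }
  pose proof (is_RInt_gen_comb _ _ x (-1) _ _ (is_RInt_gen_Gamma x Hx) H0) as H.
  apply is_RInt_gen_unique.
  replace (x * Gamma x) with (x * Gamma x + -1 * (0 - 0)) by ring.
  refine (is_RInt_gen_ext _ _ _ _ H).
  apply filter_forall. intros ab t _.
  change (x * Gamma_integrand x t + -1 * (x * Gamma_integrand x t - Gamma_integrand (x + 1) t)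
          = Gamma_integrand (x + 1) t).
  ring.
Qed.

Lemma Gamma_integrand_holder (x y l A B t : R) : 0 < A -> 0 < B -> 0 <= l <= 1 ->
  Gamma_integrand (l * x + (1 - l) * y) t <=
  exp (l * ln A + (1 - l) * ln B) * l / A * Gamma_integrand x t +
  exp (l * ln A + (1 - l) * ln B) * (1 - l) / B * Gamma_integrand y t.
Proof.
  intros HA HB Hl. rewrite !Gamma_integrand_exp.
  set (U := (x - 1) * ln t - t). set (V := (y - 1) * ln t - t).
  set (E := l * ln A + (1 - l) * ln B).
  replace ((l * x + (1 - l) * y - 1) * ln t - t)
    with (E + (l * (U - ln A) + (1 - l) * (V - ln B))) by (unfold E, U, V; ring).
  rewrite exp_plus.
  replace (exp E * l / A * exp U + exp E * (1 - l) / B * exp V)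
    with (exp E * (l * exp (U - ln A) + (1 - l) * exp (V - ln B))).
  - apply Rmult_le_compat_l; [left; apply exp_pos | apply exp_convex, Hl].
  - unfold Rminus. rewrite !exp_plus, !exp_Ropp, !exp_ln by assumption. field. lra.
Qed.

Lemma ln_Gamma_convex (x y l : R) : 0 < x -> 0 < y -> 0 <= l <= 1 ->
  ln (Gamma (l * x + (1 - l) * y)) <= l * ln (Gamma x) + (1 - l) * ln (Gamma y).
Proof.
  intros Hx Hy Hl.
  assert (Hz : 0 < l * x + (1 - l) * y) by nra.
  pose proof (Gamma_pos x Hx) as HA. pose proof (Gamma_pos y Hy) as HB.
  set (E := l * ln (Gamma x) + (1 - l) * ln (Gamma y)).
  rewrite <- (ln_exp E). apply ln_le; [apply Gamma_pos, Hz|].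
  replace (exp E) with (exp E * l / Gamma x * Gamma x + exp E * (1 - l) / Gamma y * Gamma y)
    by (field; lra).
  apply (is_RInt_gen_le_0_pinfty (Gamma_integrand (l * x + (1 - l) * y))
           (fun t => exp E * l / Gamma x * Gamma_integrand x t +
                     exp E * (1 - l) / Gamma y * Gamma_integrand y t)).
  - intros t _. apply Gamma_integrand_holder; assumption.
  - apply is_RInt_gen_Gamma, Hz.
  - apply is_RInt_gen_comb; apply is_RInt_gen_Gamma; assumption.
Qed.

(** * The Bohr-Mollerup approximation of ln Gamma *)

Lemma ln_Gamma_succ (y : R) : 0 < y -> ln (Gamma (y + 1)) = ln y + ln (Gamma y).
Proof. intros Hy. rewrite Gamma_succ, ln_mult; auto using Gamma_pos. Qed.

Lemma ln_Gamma_shift (y : R) (n : nat) : 0 < y ->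
  ln (Gamma (y + INR n + 1)) = ln (Gamma y) + sum_f_R0 (fun k => ln (y + INR k)) n.
Proof.
  intros Hy. induction n as [| n IH]; cbn [sum_f_R0].
  - rewrite Rplus_0_r, ln_Gamma_succ by exact Hy. ring.
  - pose proof (pos_INR n). rewrite S_INR.
    replace (y + (INR n + 1) + 1) with (y + INR n + 1 + 1) by ring.
    rewrite ln_Gamma_succ, IH by lra.
    replace (y + (INR n + 1)) with (y + INR n + 1) by ring. ring.
Qed.

Lemma ln_Gamma_slope_le (p q r : R) : 0 < p -> p < q -> q < r ->
  (ln (Gamma q) - ln (Gamma p)) * (r - q) <= (ln (Gamma r) - ln (Gamma q)) * (q - p).
Proof.
  intros Hp Hpq Hqr.
  set (l := (r - q) / (r - p)).
  assert (Hl : 0 <= l <= 1).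
  { unfold l. split; [apply Rdiv_le_0_compat; lra|].
    apply Rmult_le_reg_r with (r - p); [lra|]. field_simplify; lra. }
  pose proof (ln_Gamma_convex p r l Hp ltac:(lra) Hl) as H.
  replace (l * p + (1 - l) * r) with q in H by (unfold l; field; lra).
  apply Rmult_le_compat_l with (r := r - p) in H; [| lra].
  replace ((r - p) * (l * ln (Gamma p) + (1 - l) * ln (Gamma r)))
    with ((r - q) * ln (Gamma p) + (q - p) * ln (Gamma r)) in H by (unfold l; field; lra).
  nra.
Qed.

(* The logarithm of Gauss's product [(n+1)^y (n+1)! / (y (y+1) ... (y+n+1))]. *)
Definition ln_Gamma_approx (n : nat) (y : R) : R :=
  y * ln (INR n + 1) + ln (Gamma (INR n + 1 + 1)) - sum_f_R0 (fun k => ln (y + INR k)) (S n).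

(* Bohr-Mollerup: compare the slope of [ln Gamma] on [N+1, N+1+y] with those on
   [N, N+1] and [N+1+y, N+2+y], which equal [ln N] and [ln (N+1+y)]. *)
Lemma ln_Gamma_approx_bounds (n : nat) (y : R) : 0 < y ->
  0 <= ln (Gamma y) - ln_Gamma_approx n y <= y * (1 + y) / (INR n + 1).
Proof.
  intros Hy. set (N := INR n + 1).
  assert (HN : 1 <= N) by (unfold N; pose proof (pos_INR n); lra).
  assert (E : ln (Gamma y) - ln_Gamma_approx n y =
              ln (Gamma (N + 1 + y)) - ln (Gamma (N + 1)) - y * ln N).
  { unfold ln_Gamma_approx. fold N.
    replace (N + 1 + y) with (y + INR (S n) + 1) by (rewrite S_INR; unfold N; ring).
    rewrite ln_Gamma_shift by exact Hy. ring. }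
  rewrite E.
  pose proof (ln_Gamma_slope_le N (N + 1) (N + 1 + y) ltac:(lra) ltac:(lra) ltac:(lra)) as S1.
  pose proof (ln_Gamma_slope_le (N + 1) (N + 1 + y) (N + 1 + y + 1)
                ltac:(lra) ltac:(lra) ltac:(lra)) as S2.
  rewrite (ln_Gamma_succ N) in S1, S2 |- * by lra.
  rewrite (ln_Gamma_succ (N + 1 + y)) in S2 by lra.
  replace (N + 1 + y + 1 - (N + 1 + y)) with 1 in S2 by ring.
  replace (N + 1 + y - (N + 1)) with y in S1, S2 by ring.
  replace (N + 1 - N) with 1 in S1 by ring.
  pose proof (ln_sub_ln_le (N + 1 + y) N ltac:(lra) ltac:(lra)) as L.
  replace ((N + 1 + y) / N - 1) with ((1 + y) / N) in L by (field; lra).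
  assert (y * (ln (N + 1 + y) - ln N) <= y * ((1 + y) / N)) by (apply Rmult_le_compat_l; lra).
  unfold Rdiv in *. split; nra.
Qed.

Lemma Un_cv_inv_bound (u : nat -> R) (l C : R) :
  (forall n, Rabs (u n - l) <= C / (INR n + 1)) -> Un_cv u l.
Proof.
  intros H eps Heps. set (K := Rabs C + 1).
  assert (HK : 0 < K) by (unfold K; pose proof (Rabs_pos C); lra).
  destruct (archimed_cor1 (eps / K)) as [N [HN HN0]]; [apply Rdiv_lt_0_compat; lra|].
  exists N. intros n Hn. unfold R_dist.
  apply le_INR in Hn. apply lt_0_INR in HN0. pose proof (pos_INR n).
  eapply Rle_lt_trans; [apply H|].
  apply Rle_lt_trans with (K / INR N).
  - apply Rle_trans with (K / (INR n + 1)); unfold Rdiv.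
    + apply Rmult_le_compat_r; [left; apply Rinv_0_lt_compat; lra|].
      unfold K. pose proof (Rle_abs C). lra.
    + apply Rmult_le_compat_l; [lra | apply Rinv_le_contravar; lra].
  - apply Rmult_lt_reg_r with (/ K); [apply Rinv_0_lt_compat, HK|].
    replace (K / INR N * / K) with (/ INR N) by (field; lra). exact HN.
Qed.

Lemma ln_Gamma_approx_cv (y : R) : 0 < y -> Un_cv (fun n => ln_Gamma_approx n y) (ln (Gamma y)).
Proof.
  intros Hy. apply (Un_cv_inv_bound _ _ (y * (1 + y))). intros n.
  pose proof (ln_Gamma_approx_bounds n y Hy).
  rewrite Rabs_minus_sym, Rabs_pos_eq; lra.
Qed.

Lemma ln_Gamma_approx_derive (n : nat) (y : R) : 0 < y ->
  is_derive (ln_Gamma_approx n) y (ln (INR n + 1) - sum_f_R0 (fun k => / (y + INR k)) (S n)).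
Proof.
  intros Hy. unfold ln_Gamma_approx.
  apply (is_derive_minus (fun y => y * ln (INR n + 1) + ln (Gamma (INR n + 1 + 1)))).
  - auto_derive; [exact I | ring].
  - apply (is_derive_sum_f_R0 (fun k y => ln (y + INR k)) (fun k y => / (y + INR k))).
    intros k. pose proof (pos_INR k). auto_derive; [lra | field; lra].
Qed.

(** * The digamma function *)

Definition digamma_approx (n : nat) (y : R) : R :=
  ln (INR n + 1) - sum_f_R0 (fun k => / (y + INR k)) (S n).

Lemma digamma_approx_one_growing : Un_growing (fun n => digamma_approx n 1).
Proof.
  intros n. unfold digamma_approx. cbn [sum_f_R0]. rewrite !S_INR. pose proof (pos_INR n).
  pose proof (ln_sub_ln_le (INR n + 1) (INR n + 1 + 1) ltac:(lra) ltac:(lra)).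
  replace ((INR n + 1) / (INR n + 1 + 1) - 1) with (- / (INR n + 1 + 1)) in H0 by (field; lra).
  assert (/ (1 + (INR n + 1 + 1)) <= / (INR n + 1 + 1)) by (apply Rinv_le_contravar; lra).
  lra.
Qed.

Lemma ln_le_harmonic (n : nat) : ln (INR n + 1 + 1) <= sum_f_R0 (fun k => / (1 + INR k)) n.
Proof.
  induction n as [| n IH]; cbn [sum_f_R0].
  - simpl. replace (0 + 1 + 1) with 2 by ring. replace (/ (1 + 0)) with 1 by field.
    pose proof (ln_le_sub1 2). lra.
  - rewrite S_INR. pose proof (pos_INR n).
    pose proof (ln_sub_ln_le (INR n + 1 + 1 + 1) (INR n + 1 + 1) ltac:(lra) ltac:(lra)).
    replace ((INR n + 1 + 1 + 1) / (INR n + 1 + 1) - 1) with (/ (1 + (INR n + 1))) in H0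
      by (field; lra).
    lra.
Qed.

Lemma digamma_approx_one_bounded : has_ub (fun n => digamma_approx n 1).
Proof.
  exists 0. intros v [n ->]. unfold digamma_approx. cbn [sum_f_R0].
  pose proof (ln_le_harmonic n). pose proof (pos_INR n).
  assert (ln (INR n + 1) <= ln (INR n + 1 + 1)) by (apply ln_le; lra).
  assert (0 < / (1 + INR (S n))) by (rewrite S_INR; apply Rinv_0_lt_compat; lra).
  lra.
Qed.

(* [digamma_one] is [digamma 1], i.e. minus Euler's constant. *)
Definition digamma_one : R :=
  proj1_sig (growing_cv _ digamma_approx_one_growing digamma_approx_one_bounded).

Lemma digamma_approx_one_cv : Un_cv (fun n => digamma_approx n 1) digamma_one.
Proof. unfold digamma_one. destruct growing_cv as [l Hl]. exact Hl. Qed.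

Definition digamma_term (k : nat) (y : R) : R := / (y + INR k) - / (1 + INR k).

Definition digamma (y : R) : R := digamma_one - Series (fun k => digamma_term k y).

Lemma Rmin_1_mul_le (d y : R) (k : nat) : 0 < d -> d <= y -> Rmin d 1 * (INR k + 1) <= y + INR k.
Proof.
  intros Hd Hy. pose proof (pos_INR k). pose proof (Rmin_l d 1). pose proof (Rmin_r d 1).
  assert (Rmin d 1 * INR k <= INR k) by nra. lra.
Qed.

Lemma Rabs_digamma_term_le (d R0 y : R) (k : nat) : 0 < d -> d <= y <= R0 ->
  Rabs (digamma_term k y) <= (1 + R0) / (Rmin d 1 * Rmin d 1) / (INR k + 1) ^ 2.
Proof.
  intros Hd Hy. pose proof (pos_INR k).
  pose proof (Rmin_1_mul_le d y k Hd (proj1 Hy)).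
  set (m := Rmin d 1) in *. assert (Hm : 0 < m) by (apply Rmin_pos; lra).
  assert (Hm1 : m <= 1) by apply Rmin_r.
  unfold digamma_term.
  replace (/ (y + INR k) - / (1 + INR k)) with ((1 - y) * / ((y + INR k) * (INR k + 1)))
    by (field; lra).
  rewrite Rabs_mult, (Rabs_pos_eq (/ _)) by (left; apply Rinv_0_lt_compat; nra).
  replace ((1 + R0) / (m * m) / (INR k + 1) ^ 2)
    with ((1 + R0) * / (m * (INR k + 1) * (m * (INR k + 1)))) by (field; lra).
  apply Rmult_le_compat.
  - apply Rabs_pos.
  - left. apply Rinv_0_lt_compat. nra.
  - apply Rabs_le. lra.
  - apply Rinv_le_contravar; [nra | apply Rmult_le_compat; nra].
Qed.

Lemma inv_pow_le_inv_sq (d y : R) (k s : nat) : 0 < d -> d <= y -> (2 <= s)%nat ->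
  / (y + INR k) ^ s <= / Rmin d 1 ^ s / (INR k + 1) ^ 2.
Proof.
  intros Hd Hy Hs. pose proof (pos_INR k).
  pose proof (Rmin_1_mul_le d y k Hd Hy).
  set (m := Rmin d 1) in *. assert (Hm : 0 < m) by (apply Rmin_pos; lra).
  assert (H1 : (m * (INR k + 1)) ^ s <= (y + INR k) ^ s) by (apply pow_incr; nra).
  assert (H2 : (INR k + 1) ^ 2 <= (INR k + 1) ^ s) by (apply Rle_pow; lra || lia).
  rewrite Rpow_mult_distr in H1.
  assert (0 < m ^ s) by (apply pow_lt; exact Hm).
  assert (0 < (INR k + 1) ^ 2) by (apply pow_lt; lra).
  unfold Rdiv. rewrite <- Rinv_mult.
  apply Rinv_le_contravar; [nra|].
  apply Rle_trans with (m ^ s * (INR k + 1) ^ s); [apply Rmult_le_compat_l; lra | exact H1].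
Qed.

Lemma ex_series_digamma_term (y : R) : 0 < y -> ex_series (fun k => digamma_term k y).
Proof.
  intros Hy.
  apply (@ex_series_le R_AbsRing R_CompleteNormedModule _
           (fun k => (1 + y) / (Rmin y 1 * Rmin y 1) / (INR k + 1) ^ 2));
    [| apply ex_series_scal_inv_sq].
  intros k. apply (Rabs_digamma_term_le y y); lra.
Qed.

Definition half_ball (x : R) (Hx : 0 < x) : posreal := mkposreal (x / 2) ltac:(lra).

Lemma Boule_half_ball (x y : R) (Hx : 0 < x) :
  Boule x (half_ball x Hx) y -> x / 2 <= y <= 3 * x / 2.
Proof. intros Hy. unfold Boule in Hy. simpl in Hy. apply Rabs_def2 in Hy. lra. Qed.

Lemma digamma_approx_CVU (x : R) (Hx : 0 < x) : CVU digamma_approx digamma x (half_ball x Hx).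
Proof.
  intros eps Heps.
  destruct (digamma_approx_one_cv (eps / 2) ltac:(lra)) as [N1 HN1].
  destruct (CVU_Series_dominated digamma_term
              (fun k => (1 + 3 * x / 2) / (Rmin (x / 2) 1 * Rmin (x / 2) 1) / (INR k + 1) ^ 2)
              x (half_ball x Hx)
              (fun k y Hy => Rabs_digamma_term_le (x / 2) (3 * x / 2) y k ltac:(lra)
                                                (Boule_half_ball x y Hx Hy))
              (ex_series_scal_inv_sq _) (eps / 2) ltac:(lra)) as [N2 HN2].
  exists (max N1 N2). intros n y Hn Hy.
  specialize (HN1 n ltac:(lia)). specialize (HN2 (S n) y ltac:(lia) Hy).
  unfold R_dist in HN1. cbv beta in HN2.
  assert (E : digamma_approx n y = digamma_approx n 1 - sum_f_R0 (fun k => digamma_term k y) (S n)).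
  { unfold digamma_approx, digamma_term. rewrite minus_sum. ring. }
  unfold digamma. rewrite E.
  replace (digamma_one - Series (fun k => digamma_term k y)
           - (digamma_approx n 1 - sum_f_R0 (fun k => digamma_term k y) (S n)))
    with (- (digamma_approx n 1 - digamma_one)
          - (Series (fun k => digamma_term k y) - sum_f_R0 (fun k => digamma_term k y) (S n)))
    by ring.
  eapply Rle_lt_trans; [apply Rabs_triang|]. rewrite !Rabs_Ropp. lra.
Qed.

Lemma is_derive_ln_Gamma (x : R) : 0 < x -> is_derive (fun y => ln (Gamma y)) x (digamma x).
Proof.
  intros Hx. apply is_derive_Reals.
  apply (CVU_derivable ln_Gamma_approx digamma_approx _ digamma x (half_ball x Hx)).
  - apply digamma_approx_CVU.
  - intros y Hy. apply ln_Gamma_approx_cv. pose proof (Boule_half_ball x y Hx Hy). lra.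
  - intros n y Hy. apply is_derive_Reals, ln_Gamma_approx_derive.
    pose proof (Boule_half_ball x y Hx Hy). lra.
  - apply Boule_center.
Qed.

(** * The Hurwitz zeta function *)

Definition hurwitz_zeta (s : nat) (y : R) : R := Series (fun k => / (y + INR k) ^ s).

Lemma ex_series_hurwitz_zeta (s : nat) (y : R) : 0 < y -> (2 <= s)%nat ->
  ex_series (fun k => / (y + INR k) ^ s).
Proof.
  intros Hy Hs.
  apply (@ex_series_le R_AbsRing R_CompleteNormedModule _
           (fun k => / Rmin y 1 ^ s / (INR k + 1) ^ 2)); [| apply ex_series_scal_inv_sq].
  intros k. change (Rabs (/ (y + INR k) ^ s) <= / Rmin y 1 ^ s / (INR k + 1) ^ 2).
  pose proof (pos_INR k).
  rewrite Rabs_pos_eq by (left; apply Rinv_0_lt_compat, pow_lt; lra).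
  apply (inv_pow_le_inv_sq y); lra || assumption.
Qed.

Lemma hurwitz_zeta_pos (s : nat) (y : R) : 0 < y -> (2 <= s)%nat -> 0 < hurwitz_zeta s y.
Proof.
  intros Hy Hs. unfold hurwitz_zeta.
  rewrite Series_incr_1 by (apply ex_series_hurwitz_zeta; assumption).
  assert (0 < / (y + INR 0) ^ s) by (apply Rinv_0_lt_compat, pow_lt; simpl; lra).
  assert (0 <= Series (fun k => / (y + INR (S k)) ^ s)).
  { apply Series_nonneg.
    - intros k. pose proof (pos_INR (S k)). left. apply Rinv_0_lt_compat, pow_lt. lra.
    - apply (ex_series_incr_1 (fun k => / (y + INR k) ^ s)), ex_series_hurwitz_zeta; assumption. }
  lra.
Qed.

Lemma is_derive_inv_pow (a y : R) (s : nat) : 0 < y + a ->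
  is_derive (fun y => / (y + a) ^ s) y (- INR s * / (y + a) ^ S s).
Proof.
  intros Ha. destruct s as [| p].
  - auto_derive; [lra|]. simpl. field. lra.
  - assert (0 < (y + a) ^ p) by (apply pow_lt, Ha).
    auto_derive; [nra|].
    change (match p with 0%nat => 1 | S _ => INR p + 1 end) with (INR (S p)).
    simpl pow. field. lra.
Qed.

Lemma is_derive_hurwitz_zeta (s : nat) (x : R) : 0 < x -> (2 <= s)%nat ->
  is_derive (hurwitz_zeta s) x (- INR s * hurwitz_zeta (S s) x).
Proof.
  intros Hx Hs. unfold hurwitz_zeta. rewrite <- Series_scal_l.
  apply (is_derive_Series (fun k y => / (y + INR k) ^ s)
           (fun k y => - INR s * / (y + INR k) ^ S s)
           (fun k => INR s * / Rmin (x / 2) 1 ^ S s / (INR k + 1) ^ 2) (x / 2) x);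
    [lra | | | |].
  - intros k y Hy. apply is_derive_inv_pow. pose proof (pos_INR k). lra.
  - intros y Hy. apply ex_series_hurwitz_zeta; lra || assumption.
  - apply ex_series_scal_inv_sq.
  - intros k y Hy. pose proof (pos_INR k). pose proof (pos_INR s).
    rewrite Rabs_mult, Rabs_Ropp, Rabs_pos_eq by lra.
    rewrite Rabs_pos_eq by (left; apply Rinv_0_lt_compat, pow_lt; lra).
    unfold Rdiv. rewrite Rmult_assoc. apply Rmult_le_compat_l; [lra|].
    apply (inv_pow_le_inv_sq (x / 2)); lra || lia.
Qed.

Lemma hurwitz_zeta_sq_le (s : nat) (y : R) : 0 < y -> (2 <= s)%nat ->
  hurwitz_zeta (S s) y ^ 2 <= hurwitz_zeta s y * hurwitz_zeta (S (S s)) y.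
Proof.
  intros Hy Hs.
  set (a := fun k => / (y + INR k) ^ s). set (w := fun k => / (y + INR k)).
  assert (Hpos : forall k, 0 < y + INR k) by (intros k; pose proof (pos_INR k); lra).
  assert (E1 : forall k, a k * w k = / (y + INR k) ^ S s).
  { intros k. pose proof (Hpos k). assert (0 < (y + INR k) ^ s) by (apply pow_lt; lra).
    unfold a, w. simpl pow. field. lra. }
  assert (E2 : forall k, a k * w k ^ 2 = / (y + INR k) ^ S (S s)).
  { intros k. pose proof (Hpos k). assert (0 < (y + INR k) ^ s) by (apply pow_lt; lra).
    unfold a, w. simpl pow. field. lra. }
  pose proof (Series_Cauchy_Schwarz a w) as CS.
  rewrite (Series_ext _ _ E1), (Series_ext _ _ E2) in CS. apply CS.
  - intros k. left. apply Rinv_0_lt_compat, pow_lt, Hpos.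
  - apply ex_series_hurwitz_zeta; assumption.
  - apply (ex_series_ext _ _ (fun k => eq_sym (E1 k))), ex_series_hurwitz_zeta; [assumption | lia].
  - apply (ex_series_ext _ _ (fun k => eq_sym (E2 k))), ex_series_hurwitz_zeta; [assumption | lia].
Qed.

Lemma hurwitz_zeta_ratio_decreasing (s : nat) (a b : R) : (2 <= s)%nat -> 0 < a -> a < b ->
  hurwitz_zeta (S s) b / hurwitz_zeta s b < hurwitz_zeta (S s) a / hurwitz_zeta s a.
Proof.
  intros Hs Ha Hab.
  set (Z := hurwitz_zeta).
  apply (is_derive_neg_lt (fun y => Z (S s) y / Z s y)
           (fun y => (- INR (S s) * Z (S (S s)) y * Z s y - Z (S s) y * (- INR s * Z (S s) y))
                     / Z s y ^ 2) a b Hab).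
  - intros y Hy. apply is_derive_div.
    + apply is_derive_hurwitz_zeta; lra || lia.
    + apply is_derive_hurwitz_zeta; lra || lia.
    + apply Rgt_not_eq, hurwitz_zeta_pos; lra || lia.
  - intros y Hy. assert (Hy0 : 0 < y) by lra.
    pose proof (hurwitz_zeta_pos s y Hy0 Hs) as Z0.
    pose proof (hurwitz_zeta_pos (S (S s)) y Hy0 ltac:(lia)) as Z2.
    pose proof (hurwitz_zeta_sq_le s y Hy0 Hs) as CS. fold Z in Z0, Z2, CS.
    rewrite S_INR. pose proof (pos_INR s).
    apply Rdiv_neg_pos; [| apply pow_lt, Z0].
    assert (0 < Z s y * Z (S (S s)) y) by (apply Rmult_lt_0_compat; assumption).
    nra.
Qed.

Lemma is_derive_digamma (x : R) : 0 < x -> is_derive digamma x (hurwitz_zeta 2 x).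
Proof.
  intros Hx. unfold digamma, hurwitz_zeta.
  replace (Series (fun k => / (x + INR k) ^ 2))
    with (0 - Series (fun k => - INR 1 * / (x + INR k) ^ 2))
    by (rewrite Series_scal_l; simpl; ring).
  apply (is_derive_minus (fun _ => digamma_one)); [auto_derive; [exact I | reflexivity]|].
  apply (is_derive_Series digamma_term (fun k y => - INR 1 * / (y + INR k) ^ 2)
           (fun k => / Rmin (x / 2) 1 ^ 2 / (INR k + 1) ^ 2) (x / 2) x); [lra | | | |].
  - intros k y Hy. pose proof (pos_INR k). unfold digamma_term.
    auto_derive; [lra|]. simpl. field. lra.
  - intros y Hy. apply ex_series_digamma_term. lra.
  - apply ex_series_scal_inv_sq.
  - intros k y Hy. pose proof (pos_INR k).
    replace (- INR 1 * / (y + INR k) ^ 2) with (- / (y + INR k) ^ 2) by (simpl; ring).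
    rewrite Rabs_Ropp, Rabs_pos_eq by (left; apply Rinv_0_lt_compat, pow_lt; lra).
    apply (inv_pow_le_inv_sq (x / 2)); lra || lia.
Qed.

Lemma Derive_pos_ext (f g : R -> R) (y l : R) : 0 < y ->
  (forall z, 0 < z -> f z = g z) -> is_derive g y l -> Derive f y = l.
Proof.
  intros Hy Hfg Hg. rewrite (Derive_ext_loc f g).
  - apply is_derive_unique, Hg.
  - exists (mkposreal y Hy). intros z Hz. apply Hfg.
    apply ball_Rabs, Rabs_def2 in Hz. simpl in Hz. lra.
Qed.

Lemma polygamma_0 (y : R) : 0 < y -> polygamma 0 y = digamma y.
Proof. intros Hy. apply is_derive_unique, is_derive_ln_Gamma, Hy. Qed.

Lemma polygamma_hurwitz_zeta (m : nat) (y : R) : 0 < y ->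
  polygamma (S m) y = (-1) ^ m * INR (fact (S m)) * hurwitz_zeta (S (S m)) y.
Proof.
  revert y. induction m as [| m IH]; intros y Hy.
  - change (polygamma 1 y) with (Derive (polygamma 0) y).
    apply (Derive_pos_ext _ digamma y); [exact Hy | exact polygamma_0|].
    replace ((-1) ^ 0 * INR (fact 1) * hurwitz_zeta 2 y) with (hurwitz_zeta 2 y) by (simpl; ring).
    apply is_derive_digamma, Hy.
  - change (polygamma (S (S m)) y) with (Derive (polygamma (S m)) y).
    apply (Derive_pos_ext _ _ y _ Hy IH).
    replace ((-1) ^ S m * INR (fact (S (S m))) * hurwitz_zeta (S (S (S m))) y)
      with ((-1) ^ m * INR (fact (S m)) * (- INR (S (S m)) * hurwitz_zeta (S (S (S m))) y))
      by (rewrite (fact_simpl (S m)), mult_INR; simpl pow; ring).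
    apply is_derive_scal, is_derive_hurwitz_zeta; [exact Hy | lia].
Qed.

Lemma polygamma_ratio (j : nat) (y : R) : 0 < y ->
  polygamma (S (S j)) y / polygamma (S j) y =
  - INR (S (S j)) * (hurwitz_zeta (S (S (S j))) y / hurwitz_zeta (S (S j)) y).
Proof.
  intros Hy. rewrite !polygamma_hurwitz_zeta by exact Hy.
  rewrite (fact_simpl (S j)), mult_INR. simpl pow.
  assert ((-1) ^ j <> 0) by (apply pow_nonzero; lra).
  pose proof (INR_fact_neq_0 (S j)).
  pose proof (hurwitz_zeta_pos (S (S j)) y Hy ltac:(lia)).
  field. lra.
Qed.

Theorem lemmaC1 : forall (n : nat), (1 <= n)%nat ->
  forall a b : R, 0 < a -> a < b ->
    polygamma (S n) a / polygamma n a < polygamma (S n) b / polygamma n b.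
Proof.
  intros n Hn a b Ha Hab. destruct n as [| j]; [lia|].
  rewrite !polygamma_ratio by lra.
  pose proof (hurwitz_zeta_ratio_decreasing (S (S j)) a b ltac:(lia) Ha Hab).
  pose proof (lt_0_INR (S (S j)) ltac:(lia)).
  nra.
Qed.
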